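(* Let ${\bf S}\in\{{\bf Tmd},{\bf Tm4d}\}$. Then ${\bf S}$ cannot be characterized by a single finite deterministic logical matrix; that is, there is no logical matrix $\mathcal M=\langle M,D\rangle$ with $M$ finite such that, for all $\Gamma\cup\{\alpha\}\subseteq For$, $\Gamma\vdash_{\bf S}\alpha$ iff $\Gamma\vDash_{\mathcal M}\alpha$.
   Context: Formulas are built from a denumerable set of propositional variables by the unary connectives $\neg$, $\Box$ and the binary connective $\to$; $For$ is the set of all formulas. Abbreviations: $\Diamond\alpha:=\neg\Box\neg\alpha$, $\alpha\vee\beta:=\neg\alpha\to\beta$, $\alpha\wedge\beta:=\neg(\alpha\to\neg\beta)$. All Hilbert calculi below have as axioms all instances (over $For$) of the axiom schemas of a standard Hilbert calculus for classical propositional logic in the signature $\{\neg,\to\}$, plus the listed modal schemas, with modus ponens as the only rule; $\Gamma\vdash_{\bf L}\alpha$ means there is a derivation of $\alpha$ from $\Gamma$ in ${\bf L}$. ${\bf Tmd}$: (K) $\Box(\alpha\to\beta)\to(\Box\alpha\to\Box\beta)$; (Kdet) $\Box(\alpha\to\beta)\to(\Diamond\alpha\to\Box\beta)$; (K2) $\Diamond(\alpha\to\beta)\to(\Box\alpha\to\Diamond\beta)$; (M1) $\neg\Diamond\alpha\to\Box(\alpha\to\beta)$; (M2) $\Box\beta\to\Box(\alpha\to\beta)$; (M3) $\Diamond\beta\to\Diamond(\alpha\to\beta)$; (M4) $\Diamond\neg\alpha\to\Diamond(\alpha\to\beta)$; (T) $\Box\alpha\to\alpha$; (DN1) $\Box\alpha\to\Box\neg\neg\alpha$;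 (DN2) $\Box\neg\neg\alpha\to\Box\alpha$. ${\bf Tm4d}$ (also written ${\bf T4md}$) is ${\bf Tmd}$ plus (4) $\Box\alpha\to\Box\Box\alpha$. A (deterministic) logical matrix $\mathcal M=\langle M,D\rangle$ consists of a set $M$ with unary operations for $\neg,\Box$ and a binary operation for $\to$, and $D\subseteq M$; valuations are homomorphisms $h:For\to M$, and $\Gamma\vDash_{\mathcal M}\alpha$ iff every valuation mapping $\Gamma$ into $D$ maps $\alpha$ into $D$. *)

From mathcomp Require Import all_boot.
Set Implicit Arguments.
Unset Strict Implicit.
Unset Printing Implicit Defensive.

Inductive For : Type :=
| Var : nat -> For
| Neg : For -> For
| Box : For -> For
| Imp : For -> For -> For.

Definition Dia (a : For) : For := Neg (Box (Neg a)).

Inductive logic : Type := Tmd | Tm4d.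

Inductive cpl_axiom : For -> Prop :=
| A1 a b : cpl_axiom (Imp a (Imp b a))
| A2 a b c : cpl_axiom (Imp (Imp a (Imp b c)) (Imp (Imp a b) (Imp a c)))
| A3 a b : cpl_axiom (Imp (Imp (Neg b) (Neg a)) (Imp (Imp (Neg b) a) b)).

Inductive tmd_axiom : For -> Prop :=
| AxK a b : tmd_axiom (Imp (Box (Imp a b)) (Imp (Box a) (Box b)))
| AxKdet a b : tmd_axiom (Imp (Box (Imp a b)) (Imp (Dia a) (Box b)))
| AxK2 a b : tmd_axiom (Imp (Dia (Imp a b)) (Imp (Box a) (Dia b)))
| AxM1 a b : tmd_axiom (Imp (Neg (Dia a)) (Box (Imp a b)))
| AxM2 a b : tmd_axiom (Imp (Box b) (Box (Imp a b)))
| AxM3 a b : tmd_axiom (Imp (Dia b) (Dia (Imp a b)))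
| AxM4 a b : tmd_axiom (Imp (Dia (Neg a)) (Dia (Imp a b)))
| AxT a : tmd_axiom (Imp (Box a) a)
| AxDN1 a : tmd_axiom (Imp (Box a) (Box (Neg (Neg a))))
| AxDN2 a : tmd_axiom (Imp (Box (Neg (Neg a))) (Box a)).

Definition axiom (S : logic) (f : For) : Prop :=
  match S with
  | Tmd => cpl_axiom f \/ tmd_axiom f
  | Tm4d => cpl_axiom f \/ tmd_axiom f \/ (exists a, f = Imp (Box a) (Box (Box a)))
  end.

Inductive derives (S : logic) (Gamma : For -> Prop) : For -> Prop :=
| d_hyp a : Gamma a -> derives S Gamma a
| d_ax a : axiom S a -> derives S Gamma a
| d_mp a b : derives S Gamma (Imp a b) -> derives S Gamma a -> derives S Gamma b.

Definition hom (M : Type) (neg box : M -> M) (imp : M -> M -> M) (h : For -> M) : Prop :=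
  (forall a, h (Neg a) = neg (h a)) /\
  (forall a, h (Box a) = box (h a)) /\
  (forall a b, h (Imp a b) = imp (h a) (h b)).

Definition mconseq (M : Type) (neg box : M -> M) (imp : M -> M -> M) (D : M -> Prop)
  (Gamma : For -> Prop) (a : For) : Prop :=
  forall h, hom neg box imp h -> (forall g, Gamma g -> D (h g)) -> D (h a).

From mathcomp Require Import all_boot.

Set Implicit Arguments.
Unset Strict Implicit.
Unset Printing Implicit Defensive.

(* A finite characteristic matrix validates modus ponens, and by pigeonhole it
   identifies the values of two among any #|M|+1 variables p_i, p_j.  With
   F_k x := [] ~ [] ~^k x, the premise F_i p_i -> F_i p_j then takes the value
   of the theorem F_i p_i -> F_i p_i, so ~ p_0 follows from
     { x -> x } U { (F_i p_i -> F_i p_j) -> ~ p_0 | i <> j }.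
   This consequence fails in S.  In the four-valued non-deterministic matrix
   with values T, t, f, F (designated T, t), where [] maps T to T and any other
   value to f or to F, every valuation is sound for S.  The valuation choosing
   F exactly at the formulas ~^n p_n sends F_i p_i to T and F_i p_j to f when
   i <> j, so it designates all the premises but not ~ p_0. *)

Inductive V4 := VT | Vt | Vf | VF.

Definition designated (x : V4) : bool :=
  match x with VT | Vt => true | _ => false end.

Definition neg4 (x : V4) : V4 :=
  match x with VT => VF | Vt => Vf | Vf => Vt | VF => VT end.

Definition imp4 (x y : V4) : V4 :=
  match x, y with
  | VF, _ | _, VT => VT
  | VT, VF => VF
  | _, _ => if designated x ==> designated y then Vt else Vf
  end.

Definition box4 (x : V4) (choose_F : bool) : V4 :=
  if x is VT then VT else if choose_F then VF else Vf.

Section NonDeterministicValuation.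

Variable choice : For -> bool.

Fixpoint nval (a : For) : V4 :=
  match a with
  | Var _ => Vt
  | Neg b => neg4 (nval b)
  | Box b => box4 (nval b) (choice b)
  | Imp b c => imp4 (nval b) (nval c)
  end.

Lemma nval_axiom S a : axiom S a -> designated (nval a).
Proof.
case: S => /= [[] | [|[]]] => [[] *|[] *|[] *|[] *|[x ->]];
  rewrite /Dia /=;
  repeat match goal with |- context [choice ?x] => case: (choice x) end;
  by repeat match goal with |- context [nval ?x] => case: (nval x) end.
Qed.

Lemma nval_sound S Gamma a :
  derives S Gamma a -> (forall g, Gamma g -> designated (nval g)) ->
  designated (nval a).
Proof.
move=> der desG; elim: der => [b /desG | b /nval_axiom | b c _ + _] //.
by rewrite /=; case: (nval b); case: (nval c).
Qed.

Lemma nval_iter_Neg_Var k n : nval (iter k Neg (Var n)) = if odd k then Vf else Vt.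
Proof. by elim: k => //= k ->; case: (odd k). Qed.

End NonDeterministicValuation.

Fixpoint neg_var_at (k : nat) (a : For) : bool :=
  match a with
  | Var n => n == k
  | Neg b => neg_var_at k.+1 b
  | _ => false
  end.

Definition neg_var_diag (a : For) : bool := neg_var_at 0 a.

Lemma neg_var_at_iter k m n : neg_var_at k (iter m Neg (Var n)) = (n == m + k).
Proof. by elim: m k => [|m IHm] k //=; rewrite IHm addSnnS. Qed.

Lemma neg_var_diag_iter m n : neg_var_diag (iter m Neg (Var n)) = (n == m).
Proof. by rewrite /neg_var_diag neg_var_at_iter addn0. Qed.

Definition Fk (k : nat) (x : For) : For := Box (Neg (Box (iter k Neg x))).

Definition collision_premise (i j : nat) : For :=
  Imp (Imp (Fk i (Var i)) (Fk i (Var j))) (Neg (Var 0)).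

Definition separating_premises (g : For) : Prop :=
  (exists x, g = Imp x x) \/ (exists i j, i != j /\ g = collision_premise i j).

Lemma separating_premises_underivable S :
  ~ derives S separating_premises (Neg (Var 0)).
Proof.
move=> /(nval_sound (choice := neg_var_diag)) sound; suff: designated Vf by [].
apply: sound => g [[x ->] | [i [j [ij ->]]]].
  by rewrite /=; case: (nval _ x).
rewrite /= !nval_iter_Neg_Var !neg_var_diag_iter eqxx eq_sym (negbTE ij).
by case: (odd i).
Qed.

Lemma exists_collision (T : finType) (f : nat -> T) :
  exists i j, i != j /\ f i = f j.
Proof.
pose g (i : 'I_#|T|.+1) := f i.
have /injectivePn [i [j ij gij]] : ~~ injectiveb g.
  by apply/injectiveP => /leq_card; rewrite card_ord ltnn.
by exists (val i), (val j).
Qed.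

Section Matrix.

Variables (M : Type) (neg box : M -> M) (imp : M -> M -> M) (D : M -> Prop).

Definition mp_valid : Prop :=
  forall a b, mconseq neg box imp D (fun g => g = a \/ g = Imp a b) b.

Lemma characteristic_mp_valid S :
  (forall Gamma a, derives S Gamma a <-> mconseq neg box imp D Gamma a) -> mp_valid.
Proof.
move=> char a b; apply/char.
by apply: (@d_mp _ _ a); apply: d_hyp; [right | left].
Qed.

Lemma hom_Fk h k x :
  hom neg box imp h -> h (Fk k x) = box (neg (box (iter k neg (h x)))).
Proof.
case=> hN [hB _]; rewrite /Fk hB hN hB.
by congr (box (neg (box _))); elim: k => //= k <-.
Qed.

End Matrix.

Lemma finite_mp_valid_separating (M : finType) neg box imp (D : M -> Prop) :
  mp_valid neg box imp D ->
  mconseq neg box imp D separating_premises (Neg (Var 0)).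
Proof.
move=> mp h hh desG.
have [i [j [ij hij]]] := exists_collision (fun n => h (Var n)).
have collapse :
    h (Imp (Fk i (Var i)) (Fk i (Var j))) = h (Imp (Fk i (Var i)) (Fk i (Var i))).
  by case: (hh) => _ [_ hI]; rewrite !hI !(hom_Fk _ _ hh) hij.
apply: (mp (Imp (Fk i (Var i)) (Fk i (Var j))) _ h hh) => g [->|->].
  by rewrite collapse; apply: desG; left; eexists.
by apply: desG; right; exists i, j.
Qed.

Theorem mainTheorem5 :
  forall (S : logic) (M : finType) (neg box : M -> M) (imp : M -> M -> M) (D : M -> Prop),
    ~ (forall (Gamma : For -> Prop) (a : For),
          derives S Gamma a <-> mconseq neg box imp D Gamma a).
Proof.
move=> S M neg box imp D char.
apply: (@separating_premises_underivable S); apply/char.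
apply: finite_mp_valid_separating; exact: characteristic_mp_valid char.
Qed.
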